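(* In the setting described in the context, $\frac{qAK^*-q^{-1}K^*A}{q-q^{-1}}=aI$, $\frac{qK^{*-1}B-q^{-1}BK^{*-1}}{q-q^{-1}}=bI$, $\frac{qA^*K^{*-1}-q^{-1}K^{*-1}A^*}{q-q^{-1}}=a^*I$, $\frac{qK^*B^*-q^{-1}B^*K^*}{q-q^{-1}}=b^*I$.
   Context: $\mathbb K$ is an algebraically closed field, $q\in\mathbb K$ nonzero and not a root of unity, $V$ a nonzero finite-dimensional $\mathbb K$-vector space. A tridiagonal pair on $V$ is an ordered pair $A,A^*$ of linear maps $V\to V$ such that: (i) each of $A,A^*$ is diagonalizable; (ii) there is an ordering $V_0,\dots,V_d$ of the eigenspaces of $A$ with $A^*V_i\subseteq V_{i-1}+V_i+V_{i+1}$ ($V_{-1}=V_{d+1}=0$); (iii) there is an ordering $V^*_0,\dots,V^*_\delta$ of the eigenspaces of $A^*$ with $AV^*_i\subseteq V^*_{i-1}+V^*_i+V^*_{i+1}$ ($V^*_{-1}=V^*_{\delta+1}=0$); (iv) no subspace $W\ne0,V$ satisfies $AW\subseteq W$, $A^*W\subseteq W$. It is known $d=\delta$; orderings as in (ii),(iii) are called standard. Setting: $A,A^*$ is a tridiagonal pair on $V$; $V_0,\dots,V_d$ (resp. $V^*_0,\dots,V^*_d$) is a standard ordering of the eigenspaces of $A$ (resp. $A^*$); the eigenvalue of $A$ on $V_i$ is $aq^{2i-d}$ and that of $A^*$ on $V^*_i$ is $a^*q^{d-2i}$ for some nonzero $a,a^*\in\mathbb K$; $b,b^*\in\mathbb K$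 are nonzero. For $0\le i\le d$, each of the following three families of subspaces forms a decomposition of $V$ (nonzero subspaces, direct sum equal to $V$): $(V^*_0+\cdots+V^*_i)\cap(V_0+\cdots+V_{d-i})$; $(V^*_{d-i}+\cdots+V^*_d)\cap(V_i+\cdots+V_d)$; $(V^*_{d-i}+\cdots+V^*_d)\cap(V_0+\cdots+V_{d-i})$. $B$ is the linear map acting as $bq^{2i-d}I$ on $(V^*_0+\cdots+V^*_i)\cap(V_0+\cdots+V_{d-i})$; $B^*$ acts as $b^*q^{d-2i}I$ on $(V^*_{d-i}+\cdots+V^*_d)\cap(V_i+\cdots+V_d)$; $K^*$ acts as $q^{2i-d}I$ on $(V^*_{d-i}+\cdots+V^*_d)\cap(V_0+\cdots+V_{d-i})$ (for each $0\le i\le d$). *)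

From HB Require Import structures.
From mathcomp Require Import all_boot all_order all_algebra.
Set Implicit Arguments. Unset Strict Implicit. Unset Printing Implicit Defensive.
Import Order.TTheory GRing.Theory Num.Theory.
Local Open Scope ring_scope.
Local Open Scope vspace_scope.

Section TD.
Variables (K : fieldType) (V : vectType K).

Definition diagonalizable (f : 'End(V)) : Prop :=
  exists s : seq K, (\sum_(c <- s) passmx.leigenspace f c)%VS = fullv.

Definition eig_ordering (f : 'End(V)) (d : nat) (th : nat -> K)
    (Vs : nat -> {vspace V}) : Prop :=
  [/\ (forall i j, (i <= d)%N -> (j <= d)%N -> th i = th j -> i = j),
      (forall i, (i <= d)%N -> Vs i = passmx.leigenspace f (th i) /\ Vs i != 0%VS) &
      (forall c, passmx.leigenspace f c != 0%VS -> exists2 i, (i <= d)%N & c = th i)].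

Definition tridiag (g : 'End(V)) (d : nat) (Ws : nat -> {vspace V}) : Prop :=
  forall i, (i <= d)%N ->
    (g @: Ws i <= (if (0 < i)%N then Ws i.-1 else 0%VS) + Ws i
                  + (if (i < d)%N then Ws i.+1 else 0%VS))%VS.

Definition TDpair (A As : 'End(V)) : Prop :=
  [/\ diagonalizable A, diagonalizable As,
      (exists d th Vs, eig_ordering A d th Vs /\ tridiag As d Vs),
      (exists d th Vs, eig_ordering As d th Vs /\ tridiag A d Vs) &
      (forall W : {vspace V}, (A @: W <= W)%VS -> (As @: W <= W)%VS ->
         W = 0%VS \/ W = fullv)].

Definition decomposition (d : nat) (W : nat -> {vspace V}) : Prop :=
  [/\ (forall i, (i <= d)%N -> W i != 0%VS),
      directv (\sum_(i < d.+1) W i) &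
      (\sum_(i < d.+1) W i)%VS = fullv].

End TD.

(* If Y v = t v and X v = c v + y with Y y = q^2 t y, then the q-commutator of X and Y
   maps v to c t v.  On the piece W3_i the map K* is the scalar q^(2i-d), and A - θ_(d-i)
   (resp. A* - θ*_(d-i)) sends W3_i into W3_(i+1) (resp. W3_(i-1)), where K* (resp. K*^-1)
   is q^2 times larger; this gives the first and third relation.  Read backwards, they
   force K* - q^(d-2j) to send V_j into V_(j-1) and K*^-1 - q^(2j-d) to send V*_j into
   V*_(j+1).  Hence K*^-1 is triangular on the flag V_0 ⊆ V_0 + V_1 ⊆ ... and K* on the
   flag V*_d ⊆ V*_(d-1) + V*_d ⊆ ..., so the same argument on the pieces W1_i and W2_i,
   where B and B* are scalars, gives the two remaining relations. *)

From HB Require Import structures.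
From mathcomp Require Import all_boot all_order all_algebra zify ring.
Import Order.TTheory GRing.Theory Num.Theory.
Local Open Scope ring_scope.
Set Implicit Arguments. Unset Strict Implicit. Unset Printing Implicit Defensive.

Section QCommutator.
Variables (K : fieldType) (V : vectType K) (q : K).
Implicit Types (X Y : 'End(V)) (u v y : V).

Definition qcomm X Y : 'End(V) :=
  (q - q^-1)^-1 *: (q *: (X \o Y)%VF - q^-1 *: (Y \o X)%VF).

Lemma qcommE X Y v : qcomm X Y v = (q - q^-1)^-1 *: (q *: X (Y v) - q^-1 *: Y (X v)).
Proof. by rewrite scale_lfunE add_lfunE opp_lfunE !scale_lfunE !comp_lfunE. Qed.

Lemma qcomm_eigen X Y v y (t c : K) : q - q^-1 != 0 ->
  Y v = t *: v -> X v = c *: v + y -> Y y = (q ^+ 2 * t) *: y ->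
  qcomm X Y v = (c * t) *: v.
Proof.
move=> qq0 Yv Xv Yy.
have q0 : q != 0 by apply: contraNneq qq0 => ->; rewrite invr0 subr0.
rewrite qcommE Yv [X _]linearZ /= Xv [Y _]linearD /= [Y _]linearZ /= Yv Yy.
apply: (canLR (scalerK qq0)).
rewrite !scalerDr !scalerA opprD addrACA -!scalerBl.
have -> : q * t - q^-1 * (q ^+ 2 * t) = 0 by field.
by rewrite scale0r addr0; congr (_ *: _); field.
Qed.

Lemma qcomm_shift X Y u (al lam : K) : q != 0 -> q - q^-1 != 0 -> lam != 0 ->
  qcomm X Y u = al *: u -> X u = lam *: u ->
  X (Y u - (al / lam) *: u) = (lam / q ^+ 2) *: (Y u - (al / lam) *: u).
Proof.
move=> q0 qq0 lam0 + Xu; rewrite qcommE Xu [Y (_ *: _)]linearZ /=.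
move=> /(canRL (scalerKV qq0)) /eqP; rewrite subr_eq => /eqP hq.
apply: (scalerI q0); rewrite linearB /= [X (_ *: u)]linearZ /= Xu scalerBr hq.
rewrite !scalerBr ?scalerDr !scalerA addrAC -scalerBl addrC -scaleNr.
by congr (_ *: _ + _ *: _); field; rewrite ?q0 ?lam0.
Qed.

End QCommutator.

Section Flags.
Variables (K : fieldType) (V : vectType K) (d : nat).
Implicit Types (X F G : nat -> {vspace V}) (f g : 'End(V)) (c : nat -> K) (u v : V).

Definition lower X k := (\sum_(j < d.+1 | (j < k)%N) X j)%VS.
Definition upper X m := (\sum_(j < d.+1 | (m <= j)%N) X j)%VS.

Lemma sub_lower X k j : (j <= d)%N -> (j < k)%N -> (X j <= lower X k)%VS.
Proof.
move=> jd jk; rewrite -ltnS in jd.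
exact: (@sumv_sup _ _ _ (Ordinal jd) (fun j : 'I_d.+1 => (j < k)%N) (X j)
  (fun j : 'I_d.+1 => X j)).
Qed.

Lemma sub_upper X m j : (j <= d)%N -> (m <= j)%N -> (X j <= upper X m)%VS.
Proof.
move=> jd mj; rewrite -ltnS in jd.
exact: (@sumv_sup _ _ _ (Ordinal jd) (fun j : 'I_d.+1 => (m <= j)%N) (X j)
  (fun j : 'I_d.+1 => X j)).
Qed.

Lemma lowerS X k k' : (k <= k')%N -> (lower X k <= lower X k')%VS.
Proof.
move=> kk'; apply/subv_sumP => j jk; apply: sub_lower; first by rewrite -ltnS.
exact: leq_trans kk'.
Qed.

Lemma upperS X m m' : (m' <= m)%N -> (upper X m <= upper X m')%VS.
Proof.
move=> m'm; apply/subv_sumP => j mj; apply: sub_upper; first by rewrite -ltnS.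
exact: leq_trans mj.
Qed.

Lemma lower0 X : lower X 0 = 0%VS.
Proof. by rewrite /lower big_pred0. Qed.

Lemma upper_out X : upper X d.+1 = 0%VS.
Proof. by rewrite /upper big_pred0 // => j; rewrite leqNgt ltn_ord. Qed.

Lemma memv_lower_shift f (a : K) X k (U : {vspace V}) v :
  (forall j u, (j <= d)%N -> (j < k)%N -> u \in X j -> f u - a *: u \in U) ->
  v \in lower X k -> f v - a *: v \in U.
Proof.
move=> hX /memv_sumP [w wX ->]; rewrite linear_sum scaler_sumr -sumrB.
by apply: memv_suml => j jk; apply: hX (wX j jk); rewrite -ltnS.
Qed.

Lemma memv_upper_shift f (a : K) X m (U : {vspace V}) v :
  (forall j u, (j <= d)%N -> (m <= j)%N -> u \in X j -> f u - a *: u \in U) ->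
  v \in upper X m -> f v - a *: v \in U.
Proof.
move=> hX /memv_sumP [w wX ->]; rewrite linear_sum scaler_sumr -sumrB.
by apply: memv_suml => j mj; apply: hX (wX j mj); rewrite -ltnS.
Qed.

Lemma lower_tridiag f X k v : tridiag f d X -> v \in lower X k -> f v \in lower X k.+1.
Proof.
move=> tf; rewrite -[f v]subr0 -(scale0r v); apply: memv_lower_shift => j u jd jk uX.
rewrite scale0r subr0; apply: subvP (memv_img f uX); apply: subv_trans (tf j jd) _.
rewrite !subv_add -andbA; apply/and3P; split; try (case: ifP => [? | _]; last exact: sub0v).
all: by apply: sub_lower; lia.
Qed.

Lemma upper_tridiag f X m v : tridiag f d X -> v \in upper X m -> f v \in upper X m.-1.
Proof.
move=> tf; rewrite -[f v]subr0 -(scale0r v); apply: memv_upper_shift => j u jd mj uX.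
rewrite scale0r subr0; apply: subvP (memv_img f uX); apply: subv_trans (tf j jd) _.
rewrite !subv_add -andbA; apply/and3P; split; try (case: ifP => [? | _]; last exact: sub0v).
all: by apply: sub_upper; lia.
Qed.

Definition triangular f X F c :=
  forall j u, (j <= d)%N -> u \in X j -> f u - c j *: u \in F j.

Lemma triangular_sub f X F G c :
  (forall j, (j <= d)%N -> (F j <= G j)%VS) -> triangular f X F c -> triangular f X G c.
Proof. by move=> FG tf j u jd uX; apply: subvP (FG j jd) _ (tf j u jd uX). Qed.

Lemma triangular_tridiag f X F c :
  (forall j, (j <= d)%N -> (F j <= (if (0 < j)%N then X j.-1 else 0)
                                   + X j + (if (j < d)%N then X j.+1 else 0))%VS) ->
  triangular f X F c -> tridiag f d X.
Proof.
move=> FB tf j jd; apply/subvP => _ /memv_imgP [u uX ->].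
rewrite -(subrK (c j *: u) (f u)); apply: memvD; first exact: subvP (FB j jd) _ (tf j u jd uX).
by apply/memvZ/(subvP (subv_trans (addvSr _ _) (addvSl _ _))).
Qed.

Lemma triangular_lower_stable f X c k v :
  triangular f X (lower X) c -> v \in lower X k -> f v \in lower X k.
Proof.
move=> tf; rewrite -[f v]subr0 -(scale0r v); apply: memv_lower_shift => j u jd jk uX.
rewrite scale0r subr0 -(subrK (c j *: u) (f u)); apply: memvD.
  exact: subvP (lowerS X (ltnW jk)) _ (tf j u jd uX).
exact/memvZ/(subvP (sub_lower X jd jk)).
Qed.

Lemma triangular_lower f X c k v :
  triangular f X (lower X) c -> v \in lower X k.+1 -> f v - c k *: v \in lower X k.
Proof.
move=> tf; apply: memv_lower_shift => j u jd; rewrite ltnS leq_eqVlt => /orP[/eqP <- | jk] uX.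
  exact: tf.
have -> : f u - c k *: u = (f u - c j *: u) + (c j - c k) *: u by rewrite scalerBl addrA subrK.
apply: memvD; first exact: subvP (lowerS X (ltnW jk)) _ (tf j u jd uX).
exact/memvZ/(subvP (sub_lower X jd jk)).
Qed.

Lemma triangular_upper_stable f X c m v :
  triangular f X (fun j => upper X j.+1) c -> v \in upper X m -> f v \in upper X m.
Proof.
move=> tf; rewrite -[f v]subr0 -(scale0r v); apply: memv_upper_shift => j u jd mj uX.
rewrite scale0r subr0 -(subrK (c j *: u) (f u)); apply: memvD.
  by apply: subvP (upperS X _) _ (tf j u jd uX); rewrite ltnW.
exact/memvZ/(subvP (sub_upper X jd mj)).
Qed.

Lemma triangular_upper f X c m v :
  triangular f X (fun j => upper X j.+1) c -> v \in upper X m -> f v - c m *: v \in upper X m.+1.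
Proof.
move=> tf; apply: memv_upper_shift => j u jd; rewrite leq_eqVlt => /orP[/eqP -> | mj] uX.
  exact: tf.
have -> : f u - c m *: u = (f u - c j *: u) + (c j - c m) *: u by rewrite scalerBl addrA subrK.
apply: memvD; first exact: subvP (upperS X (leqW mj)) _ (tf j u jd uX).
exact/memvZ/(subvP (sub_upper X jd mj)).
Qed.

Lemma cancel_stable f g (U : {vspace V}) : cancel f g ->
  (forall v, v \in U -> f v \in U) -> forall v, v \in U -> g v \in U.
Proof.
move=> fK fU v vU.
have fU_sub : (f @: U <= U)%VS by apply/subvP => _ /memv_imgP [u uU ->]; exact: fU.
have /eqP fUE : (f @: U == U)%VS.
  have /eqP ker0 : lker f == 0%VS by apply/lker0P; exact: can_inj fK.
  by rewrite eqEdim fU_sub limg_dim_eq ?ker0 ?capv0 /=.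
by move: vU; rewrite -{1}fUE => /memv_imgP [u uU ->]; rewrite fK.
Qed.

Lemma triangular_cancel f g X F c c' : cancel f g ->
  (forall j v, (j <= d)%N -> v \in F j -> f v \in F j) ->
  (forall j, (j <= d)%N -> c' j * c j = 1) ->
  triangular f X F c -> triangular g X F c'.
Proof.
move=> fK fF cc' tf j u jd uX.
have -> : g u - c' j *: u = - c' j *: g (f u - c j *: u).
  rewrite linearB /= [g (_ *: _)]linearZ /= fK scalerBr scalerA mulNr cc' //.
  by rewrite scaleN1r opprK addrC scaleNr.
by apply/memvZ/(cancel_stable fK (fun v => fF j v jd)); apply: tf.
Qed.

Lemma sum_lower X k : (k <= d.+1)%N -> (\sum_(j < k) X j)%VS = lower X k.
Proof. by move=> kd; rewrite /lower (big_ord_widen _ _ kd). Qed.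

Lemma sum_upper X m : (\sum_(m <= j < d.+1) X j)%VS = upper X m.
Proof. by rewrite /upper big_geq_mkord. Qed.

Lemma eig_orderingP {f th X j u} : eig_ordering f d th X -> (j <= d)%N ->
  reflect (f u = th j *: u) (u \in X j).
Proof.
case=> _ hX _ jd; rewrite (hX j jd).1 memv_ker add_lfunE opp_lfunE scale_lfunE id_lfunE.
by rewrite subr_eq0; apply: eqP.
Qed.

Lemma eig_ordering_eq0 f th X (a : K) u : eig_ordering f d th X ->
  (forall i, (i <= d)%N -> a != th i) -> f u = a *: u -> u = 0.
Proof.
case=> _ _ hth ath fu; apply/eqP; apply: contraT => u0.
have /hth [i id ai] : passmx.leigenspace f a != 0%VS.
  apply: contraNneq u0 => E0; rewrite -memv0 -E0 memv_ker.
  by rewrite add_lfunE opp_lfunE scale_lfunE id_lfunE fu subrr.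
by move: (ath i id); rewrite ai eqxx.
Qed.

Lemma eig_triangular {F} f th X : eig_ordering f d th X -> triangular f X F th.
Proof. by move=> ef j u jd /(eig_orderingP ef jd) ->; rewrite subrr mem0v. Qed.

End Flags.

Section Span.
Variables (K : fieldType) (V : vectType K) (n : nat) (W : nat -> {vspace V}).
Hypothesis W_span : (\sum_(i < n) W i)%VS = fullv.

Lemma lfun_eq_on_span (f g : 'End(V)) :
  (forall i v, (i < n)%N -> v \in W i -> f v = g v) -> f = g.
Proof.
move=> fg; apply/lfunP => v; have : v \in (\sum_(i < n) W i)%VS by rewrite W_span memvf.
case/memv_sumP => w wW ->; rewrite !linear_sum; apply: eq_bigr => i _.
exact: fg (ltn_ord i) (wW i isT).
Qed.

Lemma lker0_span_eigen (f : 'End(V)) (e : nat -> K) :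
  (forall i, (i < n)%N -> e i != 0) ->
  (forall i v, (i < n)%N -> v \in W i -> f v = e i *: v) -> lker f == 0%VS.
Proof.
move=> e0 fW.
have img : limg f = fullv.
  apply/eqP; rewrite eqEsubv subvf -[X in (X <= _)%VS]W_span.
  apply/subv_sumP => i _; apply/subvP => v vW.
  apply/memv_imgP; exists ((e i)^-1 *: v); first exact: memvf.
  by rewrite linearZ /= (fW i v (ltn_ord i) vW) scalerA mulVf ?scale1r ?e0.
have := limg_ker_dim f fullv; rewrite capfv img => /(congr1 (subn^~ (\dim {:V}))).
by rewrite addnK subnn -dimv_eq0 => ->.
Qed.

End Span.

Lemma cancel_eigen (K : fieldType) (V : vectType K) (f g : 'End(V)) v (s : K) :
  cancel f g -> s != 0 -> f v = s *: v -> g v = s^-1 *: v.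
Proof.
move=> fK s0 fv; have := fK v; rewrite fv [g _]linearZ /= => gv.
by rewrite -{2}gv scalerA mulVf ?scale1r.
Qed.

Section QPower.
Variables (K : fieldType) (q : K).
Hypotheses (q0 : q != 0) (qN1 : forall n : nat, (0 < n)%N -> q ^+ n != 1).

Lemma qexp_inj : injective (fun z : int => q ^ z).
Proof.
move=> z w /= E; apply/eqP; rewrite -subr_eq0; apply: contraT.
have : q ^ (z - w) = 1 by rewrite expfzDr // E -expfzDr // subrr.
case: (z - w) => [[|n] | n] //.
  by move=> /eqP qn _; have := qN1 (ltn0Sn n); rewrite qn.
by rewrite NegzE -exprnN => /eqP; rewrite invr_eq1 => qn _; have := qN1 (ltn0Sn n); rewrite qn.
Qed.

Lemma qexpS2 (z : int) : q ^ (z + 2) = q ^+ 2 * q ^ z.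
Proof. by rewrite expfzDr // mulrC. Qed.

Lemma qexpB2 (z : int) : q ^ z / q ^+ 2 = q ^ (z - 2).
Proof. by rewrite -{1}(subrK 2 z) qexpS2 mulrC mulKf // expf_neq0. Qed.

Lemma qinv_neq : q - q^-1 != 0.
Proof.
rewrite subr_eq0; apply: contra (qN1 (isT : (0 < 2)%N)) => /eqP qV.
by rewrite expr2 {2}qV mulfV.
Qed.

End QPower.

Section TDSetting.
Variables (K : fieldType) (q : K) (V : vectType K) (A As Ks : 'End(V)) (d : nat)
  (Vi Vsi : nat -> {vspace V}) (a as_ : K).
Hypotheses (q0 : q != 0) (qN1 : forall n : nat, (0 < n)%N -> q ^+ n != 1).
Hypotheses (eA : eig_ordering A d (fun i => a * q ^ ((2 * i)%:Z - d%:Z)) Vi)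
  (tAs : tridiag As d Vi)
  (eAs : eig_ordering As d (fun i => as_ * q ^ (d%:Z - (2 * i)%:Z)) Vsi)
  (tA : tridiag A d Vsi).

Let W3 i := (upper d Vsi (d - i) :&: lower d Vi (d - i).+1)%VS.
Hypothesis W3_span : (\sum_(i < d.+1) W3 i)%VS = fullv.
Hypothesis Ks_W3 : forall i v, (i <= d)%N -> v \in W3 i ->
  Ks v = q ^ ((2 * i)%:Z - d%:Z) *: v.

Let qq0 := qinv_neq q0 qN1.

Lemma Ks_lker0 : lker Ks == 0%VS.
Proof.
apply: (lker0_span_eigen W3_span (e := fun i => q ^ ((2 * i)%:Z - d%:Z))) => [i _ | i v le_id].
  exact: expfz_neq0.
exact: Ks_W3.
Qed.

Let KsK := lker0_lfunK Ks_lker0.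
Let KsVK := lker0_lfunVK Ks_lker0.

Lemma qcomm_A_Ks : qcomm q A Ks = a *: \1%VF.
Proof.
apply: (lfun_eq_on_span W3_span) => i v; rewrite ltnS => le_id vW.
have /memv_capP [vU vL] := vW; rewrite [RHS]scale_lfunE id_lfunE.
set t := q ^ ((2 * i)%:Z - d%:Z).
set y := A v - (a * q ^ ((2 * (d - i))%:Z - d%:Z)) *: v.
have yL : y \in lower d Vi (d - i) by exact: triangular_lower (eig_triangular eA) vL.
have yU : y \in upper d Vsi (d - i).-1.
  by apply: memvB (upper_tridiag tA vU) _; apply/memvZ/(subvP (upperS _ _ (leq_pred _))).
have Ksy : Ks y = (q ^+ 2 * t) *: y.
  case: (ltnP i d) => [lt_id | le_di]; last first.
    move: yL; have -> : (d - i = 0)%N by apply/eqP; rewrite subn_eq0.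
    by rewrite lower0 memv0 => /eqP ->; rewrite linear0 scaler0.
  rewrite (Ks_W3 (i := i.+1)) //; first by rewrite /t -qexpS2 //; congr (q ^ _ *: _); lia.
  by rewrite memv_cap subnSK // subnS yU yL.
have Av : A v = (a * q ^ ((2 * (d - i))%:Z - d%:Z)) *: v + y by rewrite addrC subrK.
rewrite (qcomm_eigen qq0 (Ks_W3 le_id vW) Av Ksy); congr (_ *: _).
by rewrite /t -mulrA -expfzDr // (_ : _ + _ = 0) ?mulr1 //; lia.
Qed.

Lemma qcomm_As_Ksinv : qcomm q As Ks^-1 = as_ *: \1%VF.
Proof.
apply: (lfun_eq_on_span W3_span) => i v; rewrite ltnS => le_id vW.
have /memv_capP [vU vL] := vW; rewrite [RHS]scale_lfunE id_lfunE.
set t := q ^ ((2 * i)%:Z - d%:Z).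
set y := As v - (as_ * q ^ (d%:Z - (2 * (d - i))%:Z)) *: v.
have yU : y \in upper d Vsi (d - i).+1 by exact: triangular_upper (eig_triangular eAs) vU.
have yL : y \in lower d Vi (d - i).+2.
  by apply: memvB (lower_tridiag tAs vL) _; apply/memvZ/(subvP (lowerS _ _ (leqnSn _))).
have Ksy : Ks^-1%VF y = (q ^+ 2 * t^-1) *: y.
  case: (posnP i) => [i0 | i_gt0].
    by move: yU; rewrite i0 subn0 upper_out memv0 => /eqP ->; rewrite linear0 scaler0.
  rewrite (cancel_eigen KsK (expfz_neq0 _ q0) (Ks_W3 (i := i.-1) _ _)).
  - rewrite /t (_ : (2 * i)%:Z - d%:Z = (2 * i.-1)%:Z - d%:Z + 2); last by lia.
    by rewrite qexpS2 // invfM mulrA mulfV ?mul1r // expf_neq0.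
  - exact: leq_trans (leq_pred i) le_id.
  - by rewrite memv_cap (_ : d - i.-1 = (d - i).+1)%N ?yU ?yL //; lia.
have Av : As v = (as_ * q ^ (d%:Z - (2 * (d - i))%:Z)) *: v + y by rewrite addrC subrK.
rewrite (qcomm_eigen qq0 (cancel_eigen KsK (expfz_neq0 _ q0) (Ks_W3 le_id vW)) Av Ksy).
by rewrite invr_expz -mulrA -expfzDr // (_ : _ + _ = 0) ?mulr1 //; lia.
Qed.

Hypotheses (a0 : a != 0) (as0 : as_ != 0).

Lemma Ks_lower_bidiag : triangular d Ks Vi
  (fun j => if (0 < j)%N then Vi j.-1 else 0%VS) (fun j => q ^ (d%:Z - (2 * j)%:Z)).
Proof.
move=> j u jd uV; move/(eig_orderingP eA jd): (uV) => Au.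
have th0 : a * q ^ ((2 * j)%:Z - d%:Z) != 0 by rewrite mulf_neq0 // expfz_neq0.
have qAKu : qcomm q A Ks u = a *: u by rewrite qcomm_A_Ks scale_lfunE id_lfunE.
have := qcomm_shift q0 qq0 th0 qAKu Au.
rewrite -mulrA qexpB2 // invfM mulrA mulfV // mul1r invr_expz opprB => Az.
case: (posnP j) => [j0 | j_gt0].
  rewrite (eig_ordering_eq0 eA _ Az) ?mem0v // => i _.
  by apply/negP => /eqP /(mulfI a0) /(qexp_inj q0 qN1); rewrite j0; lia.
apply/(eig_orderingP eA (leq_trans (leq_pred j) jd)); rewrite Az.
by congr (_ * q ^ _ *: _); lia.
Qed.

Lemma Ksinv_upper_bidiag : triangular d Ks^-1 Vsi
  (fun j => if (j < d)%N then Vsi j.+1 else 0%VS) (fun j => q ^ ((2 * j)%:Z - d%:Z)).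
Proof.
move=> j u jd uV; move/(eig_orderingP eAs jd): (uV) => Asu.
have th0 : as_ * q ^ (d%:Z - (2 * j)%:Z) != 0 by rewrite mulf_neq0 // expfz_neq0.
have qAKu : qcomm q As Ks^-1 u = as_ *: u by rewrite qcomm_As_Ksinv scale_lfunE id_lfunE.
have := qcomm_shift q0 qq0 th0 qAKu Asu.
rewrite -mulrA qexpB2 // invfM mulrA mulfV // mul1r invr_expz opprB => Asz.
case: (ltnP j d) => [lt_jd | le_dj].
  apply/(eig_orderingP eAs lt_jd); rewrite Asz.
  by congr (_ * q ^ _ *: _); lia.
rewrite (eig_ordering_eq0 eAs _ Asz) ?mem0v // => i le_id.
by apply/negP => /eqP /(mulfI as0) /(qexp_inj q0 qN1); lia.
Qed.

Lemma Ks_tridiag : tridiag Ks d Vi.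
Proof. by apply: triangular_tridiag Ks_lower_bidiag => j _; rewrite -addvA addvSl. Qed.

Lemma Ksinv_tridiag : tridiag Ks^-1 d Vsi.
Proof. by apply: triangular_tridiag Ksinv_upper_bidiag => j _; rewrite addvSr. Qed.

Lemma Ksinv_lower : triangular d Ks^-1 Vi (lower d Vi) (fun j => q ^ ((2 * j)%:Z - d%:Z)).
Proof.
have Ks_low : triangular d Ks Vi (lower d Vi) (fun j => q ^ (d%:Z - (2 * j)%:Z)).
  apply: triangular_sub Ks_lower_bidiag => j jd.
  by case: ifP => [j_gt0 | _]; [apply: sub_lower; lia | exact: sub0v].
apply: (triangular_cancel KsK _ _ Ks_low) => [j v _ | j _].
  exact: triangular_lower_stable Ks_low.
by rewrite -expfzDr // (_ : _ + _ = 0) //; lia.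
Qed.

Lemma Ks_upper : triangular d Ks Vsi (fun j => upper d Vsi j.+1) (fun j => q ^ (d%:Z - (2 * j)%:Z)).
Proof.
have KsV_up : triangular d Ks^-1 Vsi (fun j => upper d Vsi j.+1) (fun j => q ^ ((2 * j)%:Z - d%:Z)).
  apply: triangular_sub Ksinv_upper_bidiag => j jd.
  by case: ifP => [lt_jd | _]; [exact: sub_upper | exact: sub0v].
apply: (triangular_cancel KsVK _ _ KsV_up) => [j v _ | j _].
  exact: triangular_upper_stable KsV_up.
by rewrite -expfzDr // (_ : _ + _ = 0) //; lia.
Qed.

Variables (B Bs : 'End(V)) (b bs : K).

Let W1 i := (lower d Vsi i.+1 :&: lower d Vi (d - i).+1)%VS.
Hypothesis W1_span : (\sum_(i < d.+1) W1 i)%VS = fullv.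
Hypothesis B_W1 : forall i v, (i <= d)%N -> v \in W1 i ->
  B v = (b * q ^ ((2 * i)%:Z - d%:Z)) *: v.

Lemma qcomm_Ksinv_B : qcomm q Ks^-1 B = b *: \1%VF.
Proof.
apply: (lfun_eq_on_span W1_span) => i v; rewrite ltnS => le_id vW.
have /memv_capP [vLs vL] := vW; rewrite [RHS]scale_lfunE id_lfunE.
set t := q ^ ((2 * i)%:Z - d%:Z).
set y := Ks^-1%VF v - q ^ ((2 * (d - i))%:Z - d%:Z) *: v.
have yL : y \in lower d Vi (d - i) by exact: triangular_lower Ksinv_lower vL.
have yLs : y \in lower d Vsi i.+2.
  by apply: memvB (lower_tridiag Ksinv_tridiag vLs) _; apply/memvZ/(subvP (lowerS _ _ (leqnSn _))).
have By : B y = (q ^+ 2 * (b * t)) *: y.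
  case: (ltnP i d) => [lt_id | le_di]; last first.
    move: yL; have -> : (d - i = 0)%N by apply/eqP; rewrite subn_eq0.
    by rewrite lower0 memv0 => /eqP ->; rewrite linear0 scaler0.
  rewrite (B_W1 (i := i.+1)) //; last by rewrite memv_cap subnSK // yLs yL.
  by rewrite /t mulrCA -qexpS2 //; congr (_ * q ^ _ *: _); lia.
have Kv : Ks^-1%VF v = q ^ ((2 * (d - i))%:Z - d%:Z) *: v + y by rewrite addrC subrK.
rewrite (qcomm_eigen qq0 (B_W1 le_id vW) Kv By).
by rewrite mulrCA -expfzDr // (_ : _ + _ = 0) ?mulr1 //; lia.
Qed.

Let W2 i := (upper d Vsi (d - i) :&: upper d Vi i)%VS.
Hypothesis W2_span : (\sum_(i < d.+1) W2 i)%VS = fullv.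
Hypothesis Bs_W2 : forall i v, (i <= d)%N -> v \in W2 i ->
  Bs v = (bs * q ^ (d%:Z - (2 * i)%:Z)) *: v.

Lemma qcomm_Ks_Bs : qcomm q Ks Bs = bs *: \1%VF.
Proof.
apply: (lfun_eq_on_span W2_span) => i v; rewrite ltnS => le_id vW.
have /memv_capP [vUs vU] := vW; rewrite [RHS]scale_lfunE id_lfunE.
set s := q ^ (d%:Z - (2 * i)%:Z).
set y := Ks v - q ^ (d%:Z - (2 * (d - i))%:Z) *: v.
have yUs : y \in upper d Vsi (d - i).+1 by exact: triangular_upper Ks_upper vUs.
have yU : y \in upper d Vi i.-1.
  by apply: memvB (upper_tridiag Ks_tridiag vU) _; apply/memvZ/(subvP (upperS _ _ (leq_pred _))).
have Bsy : Bs y = (q ^+ 2 * (bs * s)) *: y.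
  case: (posnP i) => [i0 | i_gt0].
    by move: yUs; rewrite i0 subn0 upper_out memv0 => /eqP ->; rewrite linear0 scaler0.
  rewrite (Bs_W2 (i := i.-1)).
  - by rewrite /s mulrCA -qexpS2 //; congr (_ * q ^ _ *: _); lia.
  - exact: leq_trans (leq_pred i) le_id.
  - by rewrite memv_cap (_ : d - i.-1 = (d - i).+1)%N ?yUs ?yU //; lia.
have Kv : Ks v = q ^ (d%:Z - (2 * (d - i))%:Z) *: v + y by rewrite addrC subrK.
rewrite (qcomm_eigen qq0 (Bs_W2 le_id vW) Kv Bsy).
by rewrite mulrCA -expfzDr // (_ : _ + _ = 0) ?mulr1 //; lia.
Qed.

End TDSetting.

Theorem theorem10p2 (K : closedFieldType) (q : K) (V : vectType K)
  (A As B Bs Ks : 'End(V)) (d : nat) (Vi Vsi : nat -> {vspace V})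
  (a as_ b bs : K) :
  q != 0 -> (forall n : nat, (0 < n)%N -> q ^+ n != 1) ->
  fullv != (0 : {vspace V})%VS ->
  TDpair A As ->
  eig_ordering A d (fun i => a * q ^ ((2 * i)%:Z - d%:Z)) Vi -> tridiag As d Vi ->
  eig_ordering As d (fun i => as_ * q ^ (d%:Z - (2 * i)%:Z)) Vsi -> tridiag A d Vsi ->
  a != 0 -> as_ != 0 -> b != 0 -> bs != 0 ->
  let W1 i := ((\sum_(j < i.+1) Vsi j) :&: (\sum_(j < (d - i).+1) Vi j))%VS in
  let W2 i := ((\sum_(d - i <= j < d.+1) Vsi j) :&: (\sum_(i <= j < d.+1) Vi j))%VS in
  let W3 i := ((\sum_(d - i <= j < d.+1) Vsi j) :&: (\sum_(j < (d - i).+1) Vi j))%VS in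
  decomposition d W1 -> decomposition d W2 -> decomposition d W3 ->
  (forall i v, (i <= d)%N -> v \in W1 i -> B v = (b * q ^ ((2 * i)%:Z - d%:Z)) *: v) ->
  (forall i v, (i <= d)%N -> v \in W2 i -> Bs v = (bs * q ^ (d%:Z - (2 * i)%:Z)) *: v) ->
  (forall i v, (i <= d)%N -> v \in W3 i -> Ks v = (q ^ ((2 * i)%:Z - d%:Z)) *: v) ->
  [/\ (q - q^-1)^-1 *: (q *: (A \o Ks)%VF - q^-1 *: (Ks \o A)%VF) = a *: \1%VF,
      (q - q^-1)^-1 *: (q *: (Ks^-1 \o B)%VF - q^-1 *: (B \o Ks^-1)%VF) = b *: \1%VF,
      (q - q^-1)^-1 *: (q *: (As \o Ks^-1)%VF - q^-1 *: (Ks^-1 \o As)%VF) = as_ *: \1%VF &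
      (q - q^-1)^-1 *: (q *: (Ks \o Bs)%VF - q^-1 *: (Bs \o Ks)%VF) = bs *: \1%VF].
Proof.
move=> q0 qN1 _ _ eA tAs eAs tA a0 as0 _ _ W1 W2 W3 [_ _ W1_span] [_ _ W2_span] [_ _ W3_span].
move=> B_W1 Bs_W2 Ks_W3.
have W1E i : (i <= d)%N -> W1 i = (lower d Vsi i.+1 :&: lower d Vi (d - i).+1)%VS.
  by move=> le_id; rewrite /W1 !(sum_lower (d := d)) // ltnS leq_subr.
have W2E i : W2 i = (upper d Vsi (d - i) :&: upper d Vi i)%VS by rewrite /W2 !sum_upper.
have W3E i : (i <= d)%N -> W3 i = (upper d Vsi (d - i) :&: lower d Vi (d - i).+1)%VS.
  by move=> le_id; rewrite /W3 sum_upper (sum_lower (d := d)) // ltnS leq_subr.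
rewrite (eq_bigr _ (fun (i : 'I_d.+1) _ => W1E i (ltn_ord i))) in W1_span.
rewrite (eq_bigr _ (fun (i : 'I_d.+1) _ => W2E i)) in W2_span.
rewrite (eq_bigr _ (fun (i : 'I_d.+1) _ => W3E i (ltn_ord i))) in W3_span.
have Ks_W3' i v : (i <= d)%N -> v \in (upper d Vsi (d - i) :&: lower d Vi (d - i).+1)%VS ->
    Ks v = q ^ ((2 * i)%:Z - d%:Z) *: v.
  by move=> le_id; rewrite -W3E //; exact: Ks_W3.
split.
- exact: qcomm_A_Ks q0 qN1 eA tA W3_span Ks_W3'.
- apply: (qcomm_Ksinv_B q0 qN1 eA tAs eAs tA W3_span Ks_W3' a0 as0 W1_span) => i v le_id.
  by rewrite -W1E //; exact: B_W1.
- exact: qcomm_As_Ksinv q0 qN1 tAs eAs W3_span Ks_W3'.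
- apply: (qcomm_Ks_Bs q0 qN1 eA tAs eAs tA W3_span Ks_W3' a0 as0 W2_span) => i v le_id.
  by rewrite -W2E; exact: Bs_W2.
Qed.
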